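(* Let $A$ be a subalgebra of a $K$-algebra $E$, $\Delta\subseteq\mathrm{Der}_A(E)$, and let $S$ be a regular left Ore set of $E$ with $S\subseteq N_\Delta(E)_0$. Then: (1) $A\subseteq E\subseteq S^{-1}E$, and each $\delta\in\Delta$ extends (via $\delta(s^{-1}e)=s^{-1}\delta(e)$) to an element of $\mathrm{Der}_A(S^{-1}E)$; thus $\Delta\subseteq\mathrm{Der}_A(S^{-1}E)$. (2) $S$ is a regular left Ore set of $N_\Delta(E)$. (3) $N_\Delta(S^{-1}E)=S^{-1}N_\Delta(E)$. (4) For all $i\geq0$, $N_\Delta(S^{-1}E)_i=S^{-1}N_\Delta(E)_i$.
   Context: $\mathrm{Der}_A(E)$ is the set of derivations of $E$ that are $A$-module homomorphisms. For $i\ge1$, $\Delta^i=\{\delta_1\cdots\delta_i\mid\delta_j\in\Delta\}$; for an algebra $B$ with $\Delta$ acting by derivations, $N_\Delta(B)_i=\{b\in B\mid\Delta^{i+1}b=0\}$ ($i\ge0$) and $N_\Delta(B)=\bigcup_iN_\Delta(B)_i$. A regular left Ore set is a multiplicative set of non-zero-divisors satisfying the left Ore condition; $S^{-1}E$ is the corresponding left localization, and $S^{-1}N_\Delta(E)_i=\{s^{-1}n\mid s\in S,n\in N_\Delta(E)_i\}$. *)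

From HB Require Import structures.
From mathcomp Require Import all_boot all_order all_algebra.
Set Implicit Arguments. Unset Strict Implicit. Unset Printing Implicit Defensive.
Import GRing.Theory.
Local Open Scope ring_scope.

Definition is_derA (R : pzRingType) (A : R -> Prop) (d : R -> R) : Prop :=
  [/\ forall x y, d (x + y) = d x + d y,
      forall x y, d (x * y) = d x * y + x * d y
    & forall a x, A a -> d (a * x) = a * d x].

(* Delta^n b = 0 : every product delta_1 ... delta_n of elements of Delta kills b. *)
Fixpoint killed (R : pzRingType) (Delta : (R -> R) -> Prop) (n : nat) (b : R)
    : Prop :=
  match n with
  | 0 => b = 0
  | n'.+1 => forall d, Delta d -> killed Delta n' (d b)
  end.

Definition N_i (R : pzRingType) (Delta : (R -> R) -> Prop) (i : nat) (b : R) :=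
  killed Delta i.+1 b.

Definition N_all (R : pzRingType) (Delta : (R -> R) -> Prop) (b : R) :=
  exists i, N_i Delta i b.

Definition regular_left_Ore_in (R : pzRingType) (B : R -> Prop) (S : R -> Prop)
    : Prop :=
  [/\ forall s, S s -> B s,
      S 1,
      forall s t, S s -> S t -> S (s * t),
      forall s x, S s -> B x -> (s * x = 0 -> x = 0) /\ (x * s = 0 -> x = 0)
    & forall s x, S s -> B x -> exists s' x', [/\ S s', B x' & s' * x = x' * s]].

Definition regular_left_Ore (R : pzRingType) (S : R -> Prop) :=
  regular_left_Ore_in (fun _ => True) S.

Definition is_left_localization (E : pzRingType) (Q : unitRingType)
    (S : E -> Prop) (iota : {rmorphism E -> Q}) : Prop :=
  [/\ forall s, S s -> iota s \is a GRing.unit,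
      forall q, exists s e, S s /\ q = (iota s)^-1 * iota e
    & forall e, iota e = 0 <-> exists s, S s /\ s * e = 0].

Definition ext_set (E : pzRingType) (Q : unitRingType) (S : E -> Prop)
    (iota : E -> Q) (Delta : (E -> E) -> Prop) : (Q -> Q) -> Prop :=
  fun d' => exists d, Delta d /\
    forall s e, S s -> d' ((iota s)^-1 * iota e) = (iota s)^-1 * iota (d e).

From HB Require Import structures.
From mathcomp Require Import all_boot all_order all_algebra.
From Stdlib Require Import ClassicalEpsilon.

(* Every derivation in Delta kills S, hence commutes with multiplication by
   elements of S: d (x * s) = d x * s and d (s * x) = s * d x.  Bringing two
   left fractions to a common denominator with the Ore condition, this shows
   that s^-1 e |-> s^-1 d(e) is well defined and is again a derivation, and by
   induction that the extended derivations kill s^-1 e exactly when those of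
   Delta kill e.  The same commutation rules show that the Ore witnesses of an
   element of N_Delta(E)_i stay in N_Delta(E)_i. *)

Set Implicit Arguments.
Unset Strict Implicit.
Unset Printing Implicit Defensive.

Import GRing.Theory.
Local Open Scope ring_scope.

Section DerivationConstants.
Variables (R : pzRingType) (d : R -> R).
Hypothesis d_mul : forall x y, d (x * y) = d x * y + x * d y.

Lemma der1 : d 1 = 0.
Proof.
have := d_mul 1 1; rewrite !mulr1 mul1r => d1.
by apply: (addrI (d 1)); rewrite addr0 -d1.
Qed.

Lemma der_mulr_const x c : d c = 0 -> d (x * c) = d x * c.
Proof. by move=> dc; rewrite d_mul dc mulr0 addr0. Qed.

Lemma der_mull_const c x : d c = 0 -> d (c * x) = c * d x.
Proof. by move=> dc; rewrite d_mul dc mul0r add0r. Qed.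

End DerivationConstants.

Section LeftFractions.
Variables (E : pzRingType) (Q : unitRingType) (S : E -> Prop).
Variable iota : {rmorphism E -> Q}.
Hypotheses (S_Ore : regular_left_Ore S) (S_loc : is_left_localization S iota).

Local Notation frac s e := ((iota s)^-1 * iota e).

Lemma ore1 : S 1.
Proof. by case: S_Ore. Qed.

Lemma oreM s t : S s -> S t -> S (s * t).
Proof. by case: S_Ore => _ _ mulS _ _; exact: mulS. Qed.

Lemma ore_lreg s x : S s -> s * x = 0 -> x = 0.
Proof. by case: S_Ore => _ _ _ reg _ Ss; exact: (reg s x Ss I).1. Qed.

Lemma ore_rreg s x : S s -> x * s = 0 -> x = 0.
Proof. by case: S_Ore => _ _ _ reg _ Ss; exact: (reg s x Ss I).2. Qed.

Lemma ore_left s x : S s -> exists s' x', S s' /\ s' * x = x' * s.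
Proof.
case: S_Ore => _ _ _ _ ore Ss.
by have [s' [x' [Ss' _ sx]]] := ore s x Ss I; exists s', x'.
Qed.

Lemma ore_common_denominator s t : S s -> S t ->
  exists s' x, [/\ S s', S (s' * t) & x * s = s' * t].
Proof.
move=> Ss St; have [s' [x [Ss' st]]] := ore_left t Ss.
by exists s', x; split=> //; exact: oreM.
Qed.

Lemma iota_unit s : S s -> iota s \is a GRing.unit.
Proof. by case: S_loc => unit _ _; exact: unit. Qed.

Lemma frac_surj q : exists s e, S s /\ q = frac s e.
Proof. by case: S_loc => _ surj _; exact: surj. Qed.

Lemma iota_inj : injective iota.
Proof.
move=> a b eq_ab; apply/eqP; rewrite -subr_eq0; apply/eqP.
case: S_loc => _ _ /(_ (a - b)) [+ _].
rewrite rmorphB eq_ab subrr => /(_ erefl) [s [Ss sab]].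
exact: ore_lreg sab.
Qed.

Lemma frac_eq0 s e : S s -> frac s e = 0 <-> e = 0.
Proof.
move=> Ss; split=> [se0 | ->]; last by rewrite rmorph0 mulr0.
apply: iota_inj; rewrite rmorph0 -[iota e](mulVKr (iota_unit Ss)).
by rewrite se0 mulr0.
Qed.

Lemma frac_expand s u x a : S s -> S u -> x * s = u ->
  frac s a = frac u (x * a).
Proof.
move=> Ss Su xs.
have iota_x : iota x = iota u * (iota s)^-1.
  by rewrite -xs rmorphM mulrK ?iota_unit.
by rewrite rmorphM iota_x mulrA mulKr ?iota_unit.
Qed.

Lemma frac_mul s t t' a b c : S s -> S t -> S t' -> t' * a = b * t ->
  frac s a * frac t c = frac (t' * s) (b * c).
Proof.
move=> Ss St St' ab.
have swap : iota a * (iota t)^-1 = (iota t')^-1 * iota b.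
  apply: (mulrI (iota_unit St')).
  by rewrite mulrA -rmorphM ab rmorphM mulrK ?iota_unit // mulVKr ?iota_unit.
by rewrite mulrA -(mulrA _ (iota a)) swap !rmorphM invrM ?iota_unit // !mulrA.
Qed.

Section FractionDerivation.
Variable d : E -> E.
Hypothesis d_mul : forall x y, d (x * y) = d x * y + x * d y.
Hypothesis d_S : forall s, S s -> d s = 0.

Lemma der_ore_coeff s t s' x : S s -> S t -> S s' -> x * s = s' * t -> d x = 0.
Proof.
move=> Ss St Ss' xs; apply: (ore_rreg Ss).
by rewrite -(der_mulr_const d_mul _ (d_S Ss)) xs d_S //; exact: oreM.
Qed.

Lemma der_frac_wd s e t f : S s -> S t -> frac s e = frac t f ->
  frac s (d e) = frac t (d f).
Proof.
move=> Ss St eq_frac; have [s' [x [Ss' Su xs]]] := ore_common_denominator Ss St.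
rewrite (frac_expand _ Ss Su xs) (frac_expand _ St Su erefl) in eq_frac.
rewrite (frac_expand _ Ss Su xs) (frac_expand _ St Su erefl).
have Vu : (iota (s' * t))^-1 \is a GRing.unit by rewrite unitrV iota_unit.
have xe : x * e = s' * f by apply: iota_inj; apply: (mulrI Vu).
rewrite -(der_mull_const d_mul _ (der_ore_coeff Ss St Ss' xs)) xe.
by rewrite (der_mull_const d_mul _ (d_S Ss')).
Qed.

Lemma der_frac_ext_exists :
  exists d' : Q -> Q, forall s e, S s -> d' (frac s e) = frac s (d e).
Proof.
have img q : exists r, exists s e, [/\ S s, q = frac s e & r = frac s (d e)].
  by have [s [e [Ss ->]]] := frac_surj q; exists (frac s (d e)), s, e.
exists (fun q => proj1_sig (constructive_indefinite_description _ (img q))).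
move=> s e Ss; case: constructive_indefinite_description => r /=.
move=> [t [f [St eq_frac ->]]].
exact: der_frac_wd.
Qed.

Variable d' : Q -> Q.
Hypothesis d'_frac : forall s e, S s -> d' (frac s e) = frac s (d e).

Lemma frac_ext_add (d_add : forall x y, d (x + y) = d x + d y) q r :
  d' (q + r) = d' q + d' r.
Proof.
have [s [e [Ss ->]]] := frac_surj q; have [t [f [St ->]]] := frac_surj r.
have [s' [x [_ Su xs]]] := ore_common_denominator Ss St.
rewrite (frac_expand _ Ss Su xs) (frac_expand _ St Su erefl) -mulrDr -rmorphD.
by rewrite !d'_frac // d_add rmorphD mulrDr.
Qed.

Lemma frac_ext_mul q r : d' (q * r) = d' q * r + q * d' r.
Proof.
have [s [e [Ss ->]]] := frac_surj q; have [t [f [St ->]]] := frac_surj r.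
have [t' [e' [St' te]]] := ore_left e St.
have dte : t' * d e = d e' * t.
  rewrite -(der_mull_const d_mul _ (d_S St')) te.
  by rewrite (der_mulr_const d_mul _ (d_S St)).
have St's := oreM St' Ss.
rewrite (frac_mul _ Ss St St' te) !d'_frac // d_mul rmorphD mulrDr.
by rewrite (frac_mul _ Ss St St' dte) (frac_mul _ Ss St St' te).
Qed.

Lemma frac_ext_is_derA (A : E -> Prop) :
  (forall x y, d (x + y) = d x + d y) ->
  (forall a x, A a -> d (a * x) = a * d x) ->
  is_derA (fun q => exists2 a, A a & q = iota a) d'.
Proof.
move=> d_add d_lin; split; [exact: frac_ext_add | exact: frac_ext_mul |].
move=> _ q [a Aa ->]; rewrite frac_ext_mul.
have da : d a = 0 by rewrite -[a]mulr1 d_lin // der1 // mulr0.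
have -> : d' (iota a) = 0.
  rewrite -[iota a]mul1r -invr1 -(rmorph1 iota) d'_frac; last exact: ore1.
  by rewrite da rmorph0 mulr0.
by rewrite mul0r add0r.
Qed.

End FractionDerivation.

Section Nilpotence.
Variable Delta : (E -> E) -> Prop.
Hypothesis Delta_mul :
  forall d, Delta d -> forall x y, d (x * y) = d x * y + x * d y.
Hypothesis Delta_S : forall d, Delta d -> forall s, S s -> d s = 0.

Lemma killed_ore_transfer n s s' y z : S s -> S s' -> y * s = s' * z ->
  killed Delta n z -> killed Delta n y.
Proof.
move=> Ss Ss'; elim: n y z => [|n IHn] y z /= yz kz.
  by apply: (ore_rreg Ss); rewrite yz kz mulr0.
move=> d Dd; apply: (IHn _ (d z)); last exact: kz.
have [dM dS] := (Delta_mul Dd, Delta_S Dd).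
by rewrite -(der_mulr_const dM _ (dS _ Ss)) yz (der_mull_const dM _ (dS _ Ss')).
Qed.

Lemma nilpotent_regular_left_Ore : regular_left_Ore_in (N_all Delta) S.
Proof.
split; [| exact: ore1 | exact: oreM | |].
- by move=> s Ss; exists 0%N => d Dd; exact: Delta_S.
- by move=> s x Ss _; split; [exact: ore_lreg | exact: ore_rreg].
- move=> s x Ss [i kx]; have [s' [x' [Ss' sx]]] := ore_left x Ss.
  by exists s', x'; split=> //; exists i; exact: killed_ore_transfer (esym sx) kx.
Qed.

Lemma killed_frac n s e : S s ->
  killed (ext_set S iota Delta) n (frac s e) <-> killed Delta n e.
Proof.
elim: n s e => [|n IHn] s e Ss /=; first exact: frac_eq0.
split=> [kq d Dd | ke d' [d [Dd d'_frac]]].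
- have [d' d'_frac] := der_frac_ext_exists (Delta_mul Dd) (Delta_S Dd).
  by apply/(IHn _ _ Ss); rewrite -d'_frac //; apply: kq; exists d.
- by rewrite d'_frac //; apply/IHn => //; exact: ke.
Qed.

Lemma N_i_frac i q : N_i (ext_set S iota Delta) i q <->
  exists s n, [/\ S s, N_i Delta i n & q = frac s n].
Proof.
split=> [Nq | [s [n [Ss Nn ->]]]]; last exact/killed_frac.
have [s [e [Ss q_se]]] := frac_surj q.
by exists s, e; split=> //; apply/(killed_frac _ _ Ss); rewrite -q_se.
Qed.

Lemma N_all_frac q : N_all (ext_set S iota Delta) q <->
  exists s n, [/\ S s, N_all Delta n & q = frac s n].
Proof.
split=> [[i /N_i_frac [s [n [Ss Nn ->]]]] | [s [n [Ss [i Nn] ->]]]].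
  by exists s, n; split=> //; exists i.
by exists i; apply/N_i_frac; exists s, n.
Qed.

End Nilpotence.

End LeftFractions.

Theorem proposition2p5 (K : fieldType) (E : algType K) (A : {pred E})
    (Delta : (E -> E) -> Prop) (S : E -> Prop)
    (Q : unitRingType) (iota : {rmorphism E -> Q}) :
  subalg_closed A ->
  (forall d, Delta d -> is_derA (fun a => a \in A) d) ->
  regular_left_Ore S ->
  (forall s, S s -> N_i Delta 0 s) ->
  is_left_localization S iota ->
  [/\ (* (1) *)
      injective iota /\
      (forall d, Delta d -> exists d' : Q -> Q,
          is_derA (fun q => exists2 a, a \in A & q = iota a) d' /\
          forall s e, S s -> d' ((iota s)^-1 * iota e) = (iota s)^-1 * iota (d e)),
      (* (2) *)
      regular_left_Ore_in (N_all Delta) S,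
      (* (3) *)
      (forall q, N_all (ext_set S iota Delta) q <->
         exists s n, [/\ S s, N_all Delta n & q = (iota s)^-1 * iota n])
    & (* (4) *)
      (forall i q, N_i (ext_set S iota Delta) i q <->
         exists s n, [/\ S s, N_i Delta i n & q = (iota s)^-1 * iota n])].
Proof.
move=> _ Delta_der S_Ore S_N0 S_loc.
have Delta_mul d : Delta d -> forall x y, d (x * y) = d x * y + x * d y.
  by case/Delta_der.
have Delta_S d : Delta d -> forall s, S s -> d s = 0.
  by move=> Dd s Ss; exact: S_N0.
split; first split.
- exact: iota_inj S_Ore S_loc.
- move=> d Dd; have [d_add d_mul d_lin] := Delta_der d Dd.
  have [d' d'_frac] := der_frac_ext_exists S_Ore S_loc d_mul (Delta_S d Dd).
  exists d'; split=> //.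
  exact: (frac_ext_is_derA S_Ore S_loc d_mul (Delta_S d Dd) d'_frac
           (A := fun a => a \in A) d_add d_lin).
- exact: (nilpotent_regular_left_Ore S_Ore Delta_mul Delta_S).
- move=> q; exact: (N_all_frac S_Ore S_loc Delta_mul Delta_S q).
- move=> i q; exact: (N_i_frac S_Ore S_loc Delta_mul Delta_S i q).
Qed.
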